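(* For the sequences generated by Algorithm IRG (with any stepsize rule), the direction sequence $\{d^k\}$ is gradient associated with $\{x^k\}$.
   Context: Algorithm IRG (general inexact reduced gradient framework). Let $f:\mathbb R^n\to\mathbb R$ be continuously differentiable. Parameters: initial point $x^1\in\mathbb R^n$, initial radii $\varepsilon_1>0$, $r_1>0$, reduction factors $\mu,\theta\in(0,1)$, and a sequence $\{\rho_k\}$ of positive numbers. For $k=1,2,\dots$: (1) choose $g^k\in\mathbb R^n$ with $\|g^k-\nabla f(x^k)\|\le\min\{\varepsilon_k,\rho_k\}$; (2) if $\|g^k\|\le r_k+\varepsilon_k$, set $r_{k+1}=\mu r_k$, $\varepsilon_{k+1}=\theta\varepsilon_k$, $d^k=0$; otherwise set $r_{k+1}=r_k$, $\varepsilon_{k+1}=\varepsilon_k$ and $d^k=-\frac{\|g^k\|-\varepsilon_k}{\|g^k\|}g^k$; (3) choose a stepsize $t_k>0$ by some rule; (4) set $x^{k+1}=x^k+t_kd^k$. A direction sequence $\{d^k\}$ is called gradient associated with $\{x^k\}$ if for every infinite set $J\subset\mathbb N$, $d^k\to0$ along $J$ implies $\nabla f(x^k)\to 0$ along $J$. *)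

From HB Require Import structures.
From mathcomp Require Import all_boot all_order all_algebra.
From mathcomp Require Import all_classical all_reals all_analysis.
Set Implicit Arguments. Unset Strict Implicit. Unset Printing Implicit Defensive.
Import Order.TTheory GRing.Theory Num.Theory.
Import numFieldNormedType.Exports.
Local Open Scope classical_set_scope.
Local Open Scope ring_scope.

Definition dotv (R : realType) (n : nat) (u v : 'rV[R]_n) : R :=
  \sum_(i < n) u ord0 i * v ord0 i.

Definition enorm (R : realType) (n : nat) (v : 'rV[R]_n) : R :=
  Num.sqrt (dotv v v).

Definition C1_with_gradient (R : realType) (n : nat)
  (f : 'rV[R]_n -> R) (gradf : 'rV[R]_n -> 'rV[R]_n) : Prop :=
  (forall x, differentiable f x) /\
  (forall x, ('d f x : 'rV[R]_n -> R) = (fun h => dotv (gradf x) h)) /\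
  continuous gradf.

Definition cvg0_along (R : realType) (n : nat) (J : set nat)
  (u : nat -> 'rV[R]_n) : Prop :=
  forall e : R, 0 < e ->
    exists N : nat, forall k, J k -> (N <= k)%N -> enorm (u k) < e.

Definition gradient_associated (R : realType) (n : nat)
  (gradf : 'rV[R]_n -> 'rV[R]_n) (x d : nat -> 'rV[R]_n) : Prop :=
  forall J : set nat, infinite_set J ->
    cvg0_along J d -> cvg0_along J (fun k => gradf (x k)).

(* The sequences (x, g, d, eps, r, t) are generated by Algorithm IRG
   (iterations indexed from 0 instead of 1). *)
Definition IRG_run (R : realType) (n : nat)
  (gradf : 'rV[R]_n -> 'rV[R]_n) (mu theta : R) (rho : nat -> R)
  (x g d : nat -> 'rV[R]_n) (eps r t : nat -> R) : Prop :=
  forall k : nat,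
    enorm (g k - gradf (x k)) <= Num.min (eps k) (rho k) /\
    (if enorm (g k) <= r k + eps k then
       [/\ r k.+1 = mu * r k, eps k.+1 = theta * eps k & d k = 0]
     else
       [/\ r k.+1 = r k, eps k.+1 = eps k &
           d k = - ((enorm (g k) - eps k) / enorm (g k)) *: g k]) /\
    0 < t k /\
    x k.+1 = x k + t k *: d k.

From HB Require Import structures.
From mathcomp Require Import all_boot all_order all_algebra.
From mathcomp Require Import all_classical all_reals all_analysis.
From mathcomp Require Import ring lra.
Set Implicit Arguments. Unset Strict Implicit. Unset Printing Implicit Defensive.
Import Order.TTheory GRing.Theory Num.Theory.
Import numFieldNormedType.Exports.
Local Open Scope classical_set_scope.
Local Open Scope ring_scope.

(** A null step ([d k = 0]) shrinks both radii r and eps geometrically; any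
    other step keeps them and has [|d k| = |g k| - eps k > r k]. If null steps
    stop at some K, then r is constant from K on, so [|d k| > r K > 0] and d
    cannot tend to 0 along an infinite index set. Otherwise the nonincreasing
    radii tend to 0, and since [|g k| <= |d k| + r k + eps k] at every step
    while [|g k - grad f (x k)| <= eps k], the gradients tend to 0 wherever d
    does. *)

Section EuclideanNorm.
Variables (R : realType) (n : nat).
Implicit Types u v : 'rV[R]_n.

Lemma dotv_ge0 v : 0 <= dotv v v.
Proof. by apply: sumr_ge0 => i _; rewrite -expr2 sqr_ge0. Qed.

Lemma enorm_ge0 v : 0 <= enorm v.
Proof. exact: sqrtr_ge0. Qed.

Lemma enorm0 : enorm (0 : 'rV[R]_n) = 0.
Proof. by rewrite /enorm /dotv big1 ?sqrtr0 // => i _; rewrite mxE mul0r. Qed.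

Lemma enorm_sqr v : enorm v ^+ 2 = dotv v v.
Proof. by rewrite /enorm sqr_sqrtr // dotv_ge0. Qed.

Lemma enormZ (c : R) v : enorm (c *: v) = `|c| * enorm v.
Proof.
rewrite /enorm /dotv.
have -> : \sum_(i < n) (c *: v) ord0 i * (c *: v) ord0 i
   = c ^+ 2 * \sum_(i < n) v ord0 i * v ord0 i.
  by rewrite mulr_sumr; apply: eq_bigr => i _; rewrite !mxE; ring.
by rewrite sqrtrM ?sqr_ge0 // sqrtr_sqr.
Qed.

Lemma dotvD_le u v : dotv (u + v) (u + v) <= 2 * (dotv u u + dotv v v).
Proof.
rewrite /dotv -big_split mulr_sumr /=; apply: ler_sum => i _; rewrite !mxE.
have := @sqr_ge0 R (u ord0 i - v ord0 i); rewrite !expr2; nra.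
Qed.

(* A triangle inequality up to a constant factor; it avoids Cauchy-Schwarz. *)
Lemma enormD_le u v : enorm (u + v) <= 2 * (enorm u + enorm v).
Proof.
have [hu hv] := (enorm_ge0 u, enorm_ge0 v).
rewrite -ler_sqr ?nnegrE ?enorm_ge0 ?mulr_ge0 ?addr_ge0 //.
rewrite enorm_sqr (le_trans (dotvD_le u v)) // -!enorm_sqr !expr2; nra.
Qed.

End EuclideanNorm.

Lemma infinite_set_unbounded (J : set nat) :
  infinite_set J -> forall M, exists2 k, J k & (M <= k)%N.
Proof.
move=> infJ M; apply: contrapT => noJ; apply: infJ.
apply: (sub_finite_set _ (finite_II M)) => k Jk /=.
by rewrite ltnNge; apply/negP => Mk; apply: noJ; exists k.
Qed.

Lemma nonincreasing_geometric_cvg0 (R : realType) (s : nat -> R) (c : R)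
    (P : nat -> bool) :
  0 <= c < 1 -> nonincreasing_seq s ->
  (forall k, P k -> s k.+1 = c * s k) ->
  (forall K, exists2 k, (K <= k)%N & P k) ->
  forall e, 0 < e -> exists N, forall k, (N <= k)%N -> s k < e.
Proof.
move=> /andP[c_ge0 c_lt1] s_noninc s_shrinks P_often e e_gt0.
have s_geo m : exists K, s K <= c ^+ m * s 0%N.
  elim: m => [|m [K sK]]; first by exists 0%N; rewrite expr0 mul1r.
  have [k Kk Pk] := P_often K.
  exists k.+1; rewrite s_shrinks // exprS -mulrA ler_wpM2l //.
  exact: le_trans (s_noninc _ _ Kk) sK.
have geo_cvg0 : (fun m => c ^+ m * s 0%N) @ \oo --> 0.
  rewrite -(mul0r (s 0%N)); apply: cvgMr_tmp; apply: cvg_expr.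
  by rewrite ger0_norm.
have [M _ geo_small] := cvgr0_norm_lt _ geo_cvg0 _ e_gt0.
have [K sK] := s_geo M; exists K => k Kk.
apply: le_lt_trans (s_noninc _ _ Kk) _; apply: le_lt_trans sK _.
exact: le_lt_trans (ler_norm _) (geo_small M (leqnn M)).
Qed.

Section IRG.
Variables (R : realType) (n : nat) (gradf : 'rV[R]_n -> 'rV[R]_n).
Variables (mu theta : R) (rho : nat -> R).
Variables (x g d : nat -> 'rV[R]_n) (eps r t : nat -> R).
Hypotheses (mu01 : 0 < mu < 1) (theta01 : 0 < theta < 1).
Hypotheses (eps0_gt0 : 0 < eps 0%N) (r0_gt0 : 0 < r 0%N).
Hypothesis run : IRG_run gradf mu theta rho x g d eps r t.

Definition null_step k := enorm (g k) <= r k + eps k.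

Lemma null_stepE k : null_step k ->
  [/\ r k.+1 = mu * r k, eps k.+1 = theta * eps k & d k = 0].
Proof. by have [_ [+ _]] := run k; rewrite /null_step; case: ifP. Qed.

Lemma descent_stepE k : ~~ null_step k ->
  [/\ r k.+1 = r k, eps k.+1 = eps k &
      d k = - ((enorm (g k) - eps k) / enorm (g k)) *: g k].
Proof. by have [_ [+ _]] := run k; rewrite /null_step; case: ifP. Qed.

Lemma enorm_grad_error k : enorm (g k - gradf (x k)) <= eps k.
Proof. by have [err _] := run k; apply: le_trans err _; rewrite ge_min lexx. Qed.

Lemma radii_gt0 k : 0 < eps k /\ 0 < r k.
Proof.
have [/andP[mu_gt0 _] /andP[theta_gt0 _]] := (mu01, theta01).
elim: k => [//|k [eps_gt0 r_gt0]].
have [/null_stepE[-> -> _] | /descent_stepE[-> -> _]] := boolP (null_step k) => //.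
by rewrite !mulr_gt0.
Qed.

Lemma radii_nonincreasing : nonincreasing_seq eps /\ nonincreasing_seq r.
Proof.
have [/andP[_ mu_lt1] /andP[_ theta_lt1]] := (mu01, theta01).
split; apply/nonincreasing_seqP => k; have [eps_gt0 r_gt0] := radii_gt0 k.
- have [/null_stepE[_ -> _] | /descent_stepE[_ -> _]] := boolP (null_step k) => //.
  by rewrite ger_pMl // ltW.
- have [/null_stepE[-> _ _] | /descent_stepE[-> _ _]] := boolP (null_step k) => //.
  by rewrite ger_pMl // ltW.
Qed.

Lemma enorm_descent_dir k : ~~ null_step k -> enorm (d k) = enorm (g k) - eps k.
Proof.
move=> descent; have [eps_gt0 r_gt0] := radii_gt0 k.
have [_ _ ->] := descent_stepE descent.
move: descent; rewrite /null_step -ltNge => g_big.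
have g_gt0 : 0 < enorm (g k) by lra.
rewrite enormZ normrN ger0_norm ?divfK ?gt_eqF //.
by apply: divr_ge0; lra.
Qed.

Lemma r_lt_enorm_descent_dir k : ~~ null_step k -> r k < enorm (d k).
Proof.
move=> descent; rewrite enorm_descent_dir //.
by move: descent; rewrite /null_step -ltNge; lra.
Qed.

Lemma enorm_grad_le k :
  enorm (gradf (x k)) <= 2 * (enorm (d k) + r k + 2 * eps k).
Proof.
have [eps_gt0 r_gt0] := radii_gt0 k.
have g_le : enorm (g k) <= enorm (d k) + r k + eps k.
  have [null | descent] := boolP (null_step k).
    have [_ _ ->] := null_stepE null; rewrite enorm0.
    by move: null; rewrite /null_step; lra.
  by rewrite enorm_descent_dir //; lra.
have -> : gradf (x k) = g k + (-1) *: (g k - gradf (x k)).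
  by rewrite scaleN1r opprB addrC subrK.
apply: le_trans (enormD_le _ _) _.
rewrite enormZ normrN normr1 mul1r; have := enorm_grad_error k; lra.
Qed.

Lemma dir_not_cvg0_along (J : set nat) : infinite_set J ->
  (exists K, forall k, (K <= k)%N -> ~~ null_step k) -> ~ cvg0_along J d.
Proof.
move=> infJ [K descent] d_cvg0.
have r_const j : r (K + j)%N = r K.
  elim: j => [|j IH]; first by rewrite addn0.
  by rewrite addnS; have [-> _ _] := descent_stepE (descent (K + j)%N (leq_addr _ _)).
have [N dN] := d_cvg0 (r K) (radii_gt0 K).2.
have [k Jk] := infinite_set_unbounded infJ (maxn N K).
rewrite geq_max => /andP[Nk Kk].
have r_k : r k = r K by rewrite -(subnKC Kk) r_const.
have := r_lt_enorm_descent_dir (descent k Kk).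
by rewrite r_k; have := dN k Jk Nk; lra.
Qed.

Lemma grad_cvg0_along (J : set nat) :
  (forall K, exists2 k, (K <= k)%N & null_step k) ->
  cvg0_along J d -> cvg0_along J (fun k => gradf (x k)).
Proof.
have [/andP[mu_gt0 mu_lt1] /andP[theta_gt0 theta_lt1]] := (mu01, theta01).
have [eps_noninc r_noninc] := radii_nonincreasing.
move=> null_often d_cvg0 e e_gt0.
have [Ne epsN] : exists N, forall k, (N <= k)%N -> eps k < e / 16.
  apply: (@nonincreasing_geometric_cvg0 R eps theta null_step) => //.
  - by rewrite ltW.
  - by move=> k /null_stepE[].
  - by lra.
have [Nr rN] : exists N, forall k, (N <= k)%N -> r k < e / 8.
  apply: (@nonincreasing_geometric_cvg0 R r mu null_step) => //.
  - by rewrite ltW.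
  - by move=> k /null_stepE[].
  - by lra.
have [Nd dN] := d_cvg0 (e / 4) ltac:(lra).
exists (maxn Nd (maxn Ne Nr)) => k Jk; rewrite !geq_max => /and3P[Ndk Nek Nrk].
have := enorm_grad_le k; have := dN k Jk Ndk; have := epsN k Nek.
have := rN k Nrk; lra.
Qed.

End IRG.

(* Neither f nor rho plays a role: the claim only uses the recursion of the
   algorithm and the error bound [|g k - grad f (x k)| <= eps k]. *)
Theorem mainTheorem8 (R : realType) (n : nat)
  (f : 'rV[R]_n -> R) (gradf : 'rV[R]_n -> 'rV[R]_n)
  (mu theta : R) (rho : nat -> R)
  (x g d : nat -> 'rV[R]_n) (eps r t : nat -> R) :
  C1_with_gradient f gradf ->
  0 < eps 0%N -> 0 < r 0%N ->
  0 < mu < 1 -> 0 < theta < 1 ->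
  (forall k, 0 < rho k) ->
  IRG_run gradf mu theta rho x g d eps r t ->
  gradient_associated gradf x d.
Proof.
move=> _ eps0_gt0 r0_gt0 mu01 theta01 _ run J infJ d_cvg0.
have [[K descent] | no_descent_tail] :=
  pselect (exists K, forall k, (K <= k)%N -> ~~ null_step g eps r k).
  by case: (dir_not_cvg0_along mu01 theta01 eps0_gt0 r0_gt0 run infJ
              (ex_intro _ K descent) d_cvg0).
apply: (grad_cvg0_along mu01 theta01 eps0_gt0 r0_gt0 run _ d_cvg0) => K.
apply: contrapT => no_null; apply: no_descent_tail; exists K => k Kk.
by apply/negP => null; apply: no_null; exists k.
Qed.
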